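(* Let ${\boldsymbol\lambda}=\{\lambda_v\}_{v\in V}$ be a system of weights on a directed forest $\mathcal{T}_1=(V,\mathsf{p}_1)$ and let $\mathcal{T}_2=(V,\mathsf{p}_2)$ be a directed forest thicker than $\mathcal{T}_1$. Then ${\boldsymbol\lambda}$ is a system of weights on $\mathcal{T}_2$, and the weighted shift with weights ${\boldsymbol\lambda}$ on $\mathcal{T}_1$ and the weighted shift with weights ${\boldsymbol\lambda}$ on $\mathcal{T}_2$ are equal as operators in $\ell^2(V)$ (same domain and same action).
   Context: A directed forest is a pair $\mathcal{T}=(V,\mathsf{p})$ where $V$ is a nonempty set and $\mathsf{p}\colon V\to V$ satisfies: if $n\in\mathbb{N}$, $v\in V$ and $\mathsf{p}^n(v)=v$, then $\mathsf{p}(v)=v$; roots are $\mathrm{root}(\mathcal{T})=\{v:\mathsf{p}(v)=v\}$. $\mathcal{T}_2=(V,\mathsf{p}_2)$ is thicker than $\mathcal{T}_1=(V,\mathsf{p}_1)$ if $\mathsf{p}_1(v)\in\{v,\mathsf{p}_2(v)\}$ for all $v\in V$. A system of weights on $\mathcal{T}$ is a family $\{\lambda_v\}_{v\in V}\subseteq\mathbb{C}$ with $\lambda_\omega=0$ for every $\omega\in\mathrm{root}(\mathcal{T})$. The weighted shift $S_{\boldsymbol\lambda}$ on $\mathcal{T}$ is the operator in $\ell^2(V)$ with domain $\{f\in\ell^2(V):\Gamma_{\boldsymbol\lambda}(f)\in\ell^2(V)\}$ and $S_{\boldsymbol\lambda}f=\Gamma_{\boldsymbol\lambda}(f)$, where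 $\Gamma_{\boldsymbol\lambda}\colon\mathbb{C}^V\to\mathbb{C}^V$, $\Gamma_{\boldsymbol\lambda}(f)(v)=\lambda_v f(\mathsf{p}(v))$. *)

From HB Require Import structures.
From mathcomp Require Import all_boot all_order all_algebra.
From mathcomp Require Import complex.
From mathcomp Require Import classical_sets boolp reals constructive_ereal ereal esum.
Set Implicit Arguments. Unset Strict Implicit. Unset Printing Implicit Defensive.
Import Order.TTheory GRing.Theory Num.Theory.
Local Open Scope ring_scope.
Local Open Scope classical_set_scope.

Definition directed_forest (V : Type) (p : V -> V) : Prop :=
  inhabited V /\ forall (n : nat) (v : V), iter n.+1 p v = v -> p v = v.

Definition root (V : Type) (p : V -> V) : set V := [set v | p v = v].

Definition thicker (V : Type) (p2 p1 : V -> V) : Prop :=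
  forall v, p1 v = v \/ p1 v = p2 v.

Definition weights_system (R : realType) (V : Type) (p : V -> V)
  (lam : V -> R[i]) : Prop :=
  forall w, root p w -> lam w = 0.

Definition sqmod (R : realType) (z : R[i]) : R := Normc.normc z ^+ 2.

Definition l2 (R : realType) (V : choiceType) : set (V -> R[i]) :=
  [set f | (\esum_(v in [set: V]) (sqmod (f v))%:E < +oo)%E].

Definition Gamma (R : realType) (V : Type) (p : V -> V) (lam : V -> R[i])
  (f : V -> R[i]) : V -> R[i] := fun v => lam v * f (p v).

Definition wshift_dom (R : realType) (V : choiceType) (p : V -> V)
  (lam : V -> R[i]) : set (V -> R[i]) :=
  [set f | l2 f /\ l2 (Gamma p lam f)].

Definition wshift (R : realType) (V : choiceType) (p : V -> V)
  (lam : V -> R[i]) (f : V -> R[i]) : V -> R[i] := Gamma p lam f.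

From Pilot Require Import Defs.
From HB Require Import structures.
From mathcomp Require Import all_boot all_order all_algebra.
From mathcomp Require Import complex.
From mathcomp Require Import classical_sets boolp reals constructive_ereal ereal esum.
Import GRing.Theory.
Local Open Scope ring_scope.
Local Open Scope classical_set_scope.

(* Wherever p1 and p2 disagree at v, thickness makes v a root of p1, so
   lam v = 0 and both shifts vanish there; hence Gamma is the same map for
   p1 and p2, and so are the domains and actions built from it. *)

Lemma thicker_root {V : Type} {p1 p2 : V -> V} :
  thicker p2 p1 -> Defs.root p2 `<=` Defs.root p1.
Proof.
move=> p2_thicker v p2v; case: (p2_thicker v) => // p1v.
by rewrite /Defs.root /= p1v.
Qed.

Section ThickerForest.
Context {R : realType} {V : Type} {p1 p2 : V -> V} {lam : V -> R[i]}.
Hypotheses (p2_thicker : thicker p2 p1) (lam_weights : weights_system p1 lam).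

Lemma weights_system_thicker : weights_system p2 lam.
Proof. by move=> v /(thicker_root p2_thicker)/lam_weights. Qed.

Lemma Gamma_thicker : Gamma p1 lam = Gamma p2 lam.
Proof.
apply/funext => f; apply/funext => v; rewrite /Gamma.
case: (p2_thicker v) => [p1v | -> //].
by rewrite (lam_weights _ p1v) !mul0r.
Qed.

End ThickerForest.

Theorem lemma3p7 (R : realType) (V : choiceType) (p1 p2 : V -> V)
  (lam : V -> R[i]) :
  directed_forest p1 -> directed_forest p2 -> thicker p2 p1 ->
  weights_system p1 lam ->
  weights_system p2 lam /\
  wshift_dom p1 lam = wshift_dom p2 lam /\
  (forall f, wshift_dom p1 lam f -> wshift p1 lam f = wshift p2 lam f).
Proof.
move=> _ _ p2_thicker lam_weights.
have GammaE := Gamma_thicker p2_thicker lam_weights.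
split; first exact: weights_system_thicker.
by split; [rewrite /wshift_dom GammaE | move=> f _; rewrite /wshift GammaE].
Qed.
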